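(* Let $h$ be the unique function on pairs of disjoint subsets of $\{1,\dots,n\}$ satisfying \[ h(\emptyset,J)=\delta_{\emptyset,J},\qquad h(I,J)=e^{2b_{\iota(I)}}\sum_{K\subset J}\Bigl(\prod_{i\in K}|\zeta_{i,\iota(I)}|\Bigr)h(I'\cup K,J\setminus K)\quad\text{if }I\ne\emptyset, \] with $I'=I\setminus\{\iota(I)\}$. Then $|g(I,J)|\le h(I,J)$ for all disjoint $I,J\subset\{1,\dots,n\}$, where $g(I,J)=(\Psi^{*(-1)}*D_I\Psi)(J)$.
   Context: Fix $n\ge1$, real numbers $b_1,\dots,b_n\ge0$ and complex numbers $\zeta_{ij}=\zeta_{ji}$ such that $\prod_{i,j\in I,i<j}|1+\zeta_{ij}|\le\prod_{i\in I}e^{b_i}$ for every $I\subset\{1,\dots,n\}$. Let $\mathcal{A}$ be the set of complex functions on the power set of $\{1,\dots,n\}$, with product $f*g(I)=\sum_{J\subset I}f(J)g(I\setminus J)$, unit $1_{\mathcal A}(I)=\delta_{I,\emptyset}$; any $f$ with $f(\emptyset)\ne0$ has a unique $*$-inverse $f^{*(-1)}$. $D_If(J)=f(I\cup J)$ if $I\cap J=\emptyset$, $0$ otherwise. $\Psi(I)=\prod_{i,j\in I,i<j}(1+\zeta_{ij})$. $\iota$ assigns to each nonempty $I$ an element $\iota(I)\in I$ with $\prod_{j\in I\setminus\{\iota(I)\}}|1+\zeta_{j,\iota(I)}|\le e^{2b_{\iota(I)}}$. Empty sums are $0$, empty products are $1$. *)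

From HB Require Import structures.
From mathcomp Require Import all_boot all_order all_algebra.
Set Implicit Arguments. Unset Strict Implicit. Unset Printing Implicit Defensive.
Import Order.TTheory GRing.Theory Num.Theory.
Local Open Scope ring_scope.

(* The algebra A of complex functions on the power set of {1..n} (indexed by 'I_n). *)
Definition setfun (C : Type) (n : nat) := {set 'I_n} -> C.

Definition sconv (C : numClosedFieldType) (n : nat) (f g : setfun C n) : setfun C n :=
  fun I => \sum_(J : {set 'I_n} | J \subset I) f J * g (I :\: J).

Definition sunit (C : numClosedFieldType) (n : nat) : setfun C n :=
  fun I => (I == set0)%:R.

Definition sD (C : numClosedFieldType) (n : nat) (I : {set 'I_n}) (f : setfun C n)
  : setfun C n :=
  fun J => if [disjoint I & J] then f (I :|: J) else 0.

Definition Psi (C : numClosedFieldType) (n : nat) (zeta : 'I_n -> 'I_n -> C)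
  : setfun C n :=
  fun I => \prod_(i in I) \prod_(j in I | (i < j)%N) (1 + zeta i j).

From HB Require Import structures.
From mathcomp Require Import all_boot all_order all_algebra.
Import Order.TTheory GRing.Theory Num.Theory.
Local Open Scope ring_scope.

(* Write g(I, J) = (Psi^{*(-1)} * D_I Psi)(J) and I' = I \ {i} for some i in I.
   Splitting the factors attached to i off Psi(I u L) gives
     Psi(I u L) = Psi(I' u L) * prod_{j in I'} (1 + zeta_ji) * prod_{j in L} (1 + zeta_ji),
   and expanding the last product over the subsets K of L yields
     D_I Psi(L) = prod_{j in I'} (1 + zeta_ji) * sum_{K <= L} (prod_{j in K} zeta_ji)
                    * Psi(I' u L),
   where Psi(I' u L) = D_{I' u K} Psi(L \ K).  Convolving with Psi^{*(-1)} and
   exchanging the two sums, g satisfies the same recursion as h for i = iota(I),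
   with complex coefficients whose moduli are bounded by those of h (this is the
   defining property of iota).  Since moreover g(empty, J) = 1_A(J) = h(empty, J),
   the bound |g| <= h follows by induction on |I u J|, which drops by one at each
   step of the recursion. *)

Lemma prod_1D_subsets (R : comNzRingType) (T : finType) (L : {set T}) (x : T -> R) :
  \prod_(j in L) (1 + x j) = \sum_(K : {set T} | K \subset L) \prod_(j in K) x j.
Proof.
have -> : \prod_(j in L) (1 + x j) = \prod_j ((if j \in L then x j else 0) + 1).
  by rewrite big_mkcond; apply: eq_bigr => j _; case: ifP; rewrite ?add0r // addrC.
rewrite bigA_distr [RHS]big_mkcond; apply: eq_bigr => K _.
have [KL | /subsetPn [i iK iL]] := boolP (K \subset L).
  rewrite [RHS]big_mkcond; apply: eq_bigr => i _.
  by case: ifP => // iK; rewrite (subsetP KL _ iK).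
by rewrite (bigD1 i) //= iK (negbTE iL) mul0r.
Qed.

Section SetIdentities.
Variable T : finType.
Implicit Types A J K L : {set T}.

Lemma disjoint_moveU A J K :
  [disjoint A & J] -> [disjoint A :|: K & J :\: K].
Proof.
move=> dAJ; apply/pred0P => x /=; rewrite !inE.
case: (x \in K); rewrite /= ?andbF // orbF.
by case xA: (x \in A); rewrite // (disjointFr dAJ xA).
Qed.

Lemma setU_moveU A K L : K \subset L -> (A :|: K) :|: (L :\: K) = A :|: L.
Proof.
move=> KL; apply/setP => x; rewrite !inE.
by case xK: (x \in K); rewrite ?(subsetP KL x xK) ?orbT ?orbF.
Qed.

End SetIdentities.

Lemma sconv_sD0 (C : numClosedFieldType) n (f g : setfun C n) (J : {set 'I_n}) :
  sconv f (sD set0 g) J = sconv f g J.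
Proof.
apply: eq_bigr => M _; rewrite /sD set0U.
by have -> : [disjoint set0 & J :\: M] by apply/pred0P => x /=; rewrite inE.
Qed.

Section PsiRecursion.
Context {C : numClosedFieldType} {n : nat} {zeta : 'I_n -> 'I_n -> C}.
Hypothesis zeta_sym : forall i j, zeta i j = zeta j i.

Lemma Psi_setU1 i (S : {set 'I_n}) :
  i \notin S -> Psi zeta (i |: S) = Psi zeta S * \prod_(j in S) (1 + zeta j i).
Proof.
move=> iS; rewrite /Psi.
pose f (a b : 'I_n) : C := if (a < b)%N then 1 + zeta a b else 1.
have full_prod (X : {set 'I_n}) :
    \prod_(a in X) \prod_(b in X | (a < b)%N) (1 + zeta a b)
  = \prod_(a in X) \prod_(b in X) f a b.
  by apply: eq_bigr => a _; rewrite big_mkcondr.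
have fii : f i i = 1 by rewrite /f ltnn.
rewrite !full_prod big_setU1 //= (big_setU1 i) //= fii mul1r.
rewrite [X in _ * X = _](eq_bigr (fun a => f a i * \prod_(b in S) f a b)); last first.
  by move=> a _; rewrite big_setU1.
rewrite big_split /= mulrCA mulrA -big_split /= [RHS]mulrC; congr (_ * _).
apply: eq_bigr => j jS; have ji : j != i by apply: contraNneq iS => <-.
case: (ltngtP i j) => [lt_ij | lt_ji | /val_inj eq_ij].
- by rewrite /f lt_ij ltnNge (ltnW lt_ij) mul1r zeta_sym.
- by rewrite /f lt_ji ltnNge (ltnW lt_ji) mulr1.
- by rewrite eq_ij eqxx in ji.
Qed.

Lemma sD_Psi_expand i (I L : {set 'I_n}) :
  i \in I -> [disjoint I & L] ->
  sD I (Psi zeta) L = (\prod_(j in I :\ i) (1 + zeta j i)) *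
    \sum_(K : {set 'I_n} | K \subset L)
       (\prod_(j in K) zeta j i) * Psi zeta ((I :\ i) :|: L).
Proof.
move=> iI dIL; rewrite /sD dIL.
have iL : i \notin L by rewrite (disjointFr dIL iI).
have dI'L : [disjoint I :\ i & L] by apply: disjointWl dIL; apply: subsetDl.
rewrite -{1}(setD1K iI) -setUA Psi_setU1; last by rewrite !inE eqxx (negbTE iL).
rewrite (eq_bigl [predU I :\ i & L]) => [|j]; last by rewrite !inE.
by rewrite bigU // -mulr_suml -prod_1D_subsets mulrC -mulrA.
Qed.

Lemma conv_sD_Psi_expand (Pinv : setfun C n) {i : 'I_n} {I J : {set 'I_n}} :
  i \in I -> [disjoint I & J] ->
  sconv Pinv (sD I (Psi zeta)) J = (\prod_(j in I :\ i) (1 + zeta j i)) *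
    \sum_(K : {set 'I_n} | K \subset J) (\prod_(j in K) zeta j i) *
       sconv Pinv (sD ((I :\ i) :|: K) (Psi zeta)) (J :\: K).
Proof.
move=> iI dIJ; rewrite /sconv.
under [LHS]eq_bigr => M _.
  rewrite (@sD_Psi_expand i) //; last by apply: disjointWr dIJ; apply: subsetDl.
  rewrite mulrCA mulr_sumr; over.
rewrite -mulr_sumr; congr (_ * _).
under [RHS]eq_bigr => K _ do rewrite mulr_sumr.
rewrite (exchange_big_dep (fun K : {set 'I_n} => K \subset J)) /=; last first.
  by move=> M K _ KJM; apply: subset_trans KJM (subsetDl _ _).
apply: eq_bigr => K KJ; apply: eq_big => [M | M /andP [MJ KJM]].
  by rewrite !subsetD KJ disjoint_sym.
have dIJM : [disjoint I :\ i & J :\: M].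
  by apply: disjointW dIJ; [apply: subsetDl | apply: subsetDl].
rewrite setDDl [K :|: M]setUC -setDDl /sD disjoint_moveU // setU_moveU //.
by rewrite mulrCA.
Qed.

End PsiRecursion.

(* E i plays the role of e^{b_i} (b_i >= 0  <=>  E i real, E i >= 1). *)
Theorem mainTheorem6 (C : numClosedFieldType) (n : nat) (n_pos : (0 < n)%N)
  (E : 'I_n -> C) (E_ge1 : forall i, 1 <= E i)
  (zeta : 'I_n -> 'I_n -> C) (zeta_sym : forall i j, zeta i j = zeta j i)
  (hyp : forall I : {set 'I_n},
     \prod_(i in I) \prod_(j in I | (i < j)%N) `|1 + zeta i j| <= \prod_(i in I) E i)
  (iota : {set 'I_n} -> 'I_n)
  (iota_in : forall I : {set 'I_n}, I != set0 -> iota I \in I)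
  (iota_bound : forall I : {set 'I_n}, I != set0 ->
     \prod_(j in I :\ iota I) `|1 + zeta j (iota I)| <= E (iota I) ^+ 2)
  (Psiinv : setfun C n)
  (Psiinv_spec : sconv Psiinv (Psi zeta) = @sunit C n)
  (h : {set 'I_n} -> {set 'I_n} -> C)
  (h_empty : forall J : {set 'I_n}, h set0 J = (J == set0)%:R)
  (h_rec : forall I J : {set 'I_n}, I != set0 -> [disjoint I & J] ->
     h I J = E (iota I) ^+ 2 *
       \sum_(K : {set 'I_n} | K \subset J)
          (\prod_(i in K) `|zeta i (iota I)|) * h ((I :\ iota I) :|: K) (J :\: K)) :
  forall I J : {set 'I_n}, [disjoint I & J] ->
    `| sconv Psiinv (sD I (Psi zeta)) J | <= h I J.
Proof.
move=> I J; have [k] := ubnP #|I :|: J|.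
elim: k I J => // k IH I J size_IJ dIJ.
have [-> | I0] := eqVneq I set0.
  rewrite sconv_sD0 Psiinv_spec /sunit h_empty.
  by case: (J == set0); rewrite ?normr1 ?normr0.
set i := iota I; have iI : i \in I := iota_in I I0.
have iJ : i \notin J by rewrite (disjointFr dIJ iI).
rewrite (conv_sD_Psi_expand zeta_sym Psiinv iI dIJ) (h_rec I J I0 dIJ) normrM.
apply: ler_pM; rewrite ?normr_ge0 // ?normr_prod ?iota_bound //.
apply: le_trans (ler_norm_sum _ _ _) _; apply: ler_sum => K KJ.
rewrite normrM normr_prod; apply: ler_wpM2l.
  by apply: prodr_ge0 => j _; apply: normr_ge0.
have dI'J : [disjoint I :\ i & J] by apply: disjointWl dIJ; apply: subsetDl.
apply: IH; last exact: disjoint_moveU.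
rewrite setU_moveU //; have -> : I :\ i :|: J = (I :|: J) :\ i.
  by rewrite setDUl [J :\ i](setDidPl _) // disjoint_sym disjoints1.
by move: size_IJ; rewrite (cardsD1 i (I :|: J)) inE iI.
Qed.
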